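(* Let $(G,* )$ be a group and let $\mathcal{L},\mathcal{R}$ be families of subsets of $G$ such that: (1) whenever $x*y\in L\in\mathcal{L}$, there exist $L_x,L_y\in\mathcal{L}$ with $x\in L_x$, $y\in L_y$ and $L_x*L_y\subseteq L$; (2) whenever $x*y\in R\in\mathcal{R}$, there exist $R_x,R_y\in\mathcal{R}$ with $x\in R_x$, $y\in R_y$ and $R_x*R_y\subseteq R$. Equip $G$ with the topology generated by $\mathcal{L}\cup\mathcal{R}$ as a subbase and $G\times G$ with the product topology. Then the map $f:G\times G\to G$, $f(x,y)=x*y$, is continuous.
   Context: For $A,B\subseteq G$, $A*B=\{a*b : a\in A,\ b\in B\}$. *)

Set Implicit Arguments.

Definition setmul {G : Type} (mul : G -> G -> G) (A B : G -> Prop) : G -> Prop :=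
  fun z => exists a b, A a /\ B b /\ z = mul a b.

Definition subset {T : Type} (A B : T -> Prop) : Prop := forall x, A x -> B x.

Inductive gen_open {T : Type} (S : (T -> Prop) -> Prop) : (T -> Prop) -> Prop :=
| go_sub : forall A, S A -> gen_open S A
| go_full : gen_open S (fun _ => True)
| go_inter : forall A B, gen_open S A -> gen_open S B ->
    gen_open S (fun x => A x /\ B x)
| go_union : forall (F : (T -> Prop) -> Prop),
    (forall A, F A -> gen_open S A) ->
    gen_open S (fun x => exists A, F A /\ A x).

Definition fam_union {T : Type} (F1 F2 : (T -> Prop) -> Prop) : (T -> Prop) -> Prop :=
  fun A => F1 A \/ F2 A.

Definition prod_subbase {X Y : Type} (OX : (X -> Prop) -> Prop)
  (OY : (Y -> Prop) -> Prop) : (X * Y -> Prop) -> Prop :=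
  fun W => exists U V, OX U /\ OY V /\ W = (fun p => U (fst p) /\ V (snd p)).

Definition prod_open {X Y : Type} (OX : (X -> Prop) -> Prop)
  (OY : (Y -> Prop) -> Prop) : (X * Y -> Prop) -> Prop :=
  gen_open (prod_subbase OX OY).

Definition continuous_wrt {X Y : Type} (OX : (X -> Prop) -> Prop)
  (OY : (Y -> Prop) -> Prop) (f : X -> Y) : Prop :=
  forall W, OY W -> OX (fun x => W (f x)).

Definition split_family {G : Type} (mul : G -> G -> G)
  (F : (G -> Prop) -> Prop) : Prop :=
  forall (x y : G) (L : G -> Prop), F L -> L (mul x y) ->
    exists Lx Ly, F Lx /\ F Ly /\ Lx x /\ Ly y /\ subset (setmul mul Lx Ly) L.

(* Multiplication is continuous as soon as the preimage of every subbasic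
   set L is open.  If x * y lies in L, the splitting condition supplies
   subbasic L_x and L_y around x and y with L_x * L_y inside L, so the open
   rectangle L_x x L_y is a neighbourhood of (x, y) inside the preimage of L. *)
From Stdlib Require Import FunctionalExtensionality PropExtensionality.

Lemma gen_open_ext {T : Type} (S : (T -> Prop) -> Prop) (A B : T -> Prop) :
  gen_open S A -> (forall x, A x <-> B x) -> gen_open S B.
Proof.
  intros HA AB.
  replace B with A; [exact HA|].
  apply functional_extensionality; intro x.
  apply propositional_extensionality, AB.
Qed.

Lemma gen_open_of_nbhd {T : Type} (S : (T -> Prop) -> Prop) (U : T -> Prop) :
  (forall x, U x -> exists W, gen_open S W /\ W x /\ subset W U) ->
  gen_open S U.
Proof.
  intros nbhd.
  apply gen_open_ext with
    (A := fun x => exists W, (gen_open S W /\ subset W U) /\ W x).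
  - apply go_union; tauto.
  - intro x; split.
    + intros [W [[_ WU] Wx]]. exact (WU x Wx).
    + intros Ux. destruct (nbhd x Ux) as [W [HW [Wx WU]]]. eauto.
Qed.

Lemma continuous_wrt_subbase {X Y : Type} (OX : (X -> Prop) -> Prop)
  (S : (Y -> Prop) -> Prop) (f : X -> Y) :
  OX (fun _ => True) ->
  (forall A B, OX A -> OX B -> OX (fun x => A x /\ B x)) ->
  (forall F : (X -> Prop) -> Prop, (forall A, F A -> OX A) ->
     OX (fun x => exists A, F A /\ A x)) ->
  (forall A, S A -> OX (fun x => A (f x))) ->
  continuous_wrt OX (gen_open S) f.
Proof.
  intros OX_full OX_inter OX_union OX_sub W HW.
  induction HW as [A HA| |A B _ IHA _ IHB|F _ IH].
  - exact (OX_sub A HA).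
  - exact OX_full.
  - exact (OX_inter _ _ IHA IHB).
  - set (preims := fun B : X -> Prop =>
      exists A, F A /\ B = (fun x => A (f x))).
    assert (Hunion : OX (fun x => exists B, preims B /\ B x)).
    { apply OX_union. intros B [A [HA ->]]. exact (IH A HA). }
    replace (fun x => exists A, F A /\ A (f x))
      with (fun x => exists B, preims B /\ B x); [exact Hunion|].
    apply functional_extensionality; intro x.
    apply propositional_extensionality; split.
    + intros [B [[A [HA ->]] HAx]]. eauto.
    + intros [A [HA HAx]]. exists (fun x => A (f x)). unfold preims; eauto.
Qed.

Lemma prod_open_rect {X Y : Type} (OX : (X -> Prop) -> Prop)
  (OY : (Y -> Prop) -> Prop) (U : X -> Prop) (V : Y -> Prop) :
  OX U -> OY V -> prod_open OX OY (fun p => U (fst p) /\ V (snd p)).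
Proof.
  intros HU HV. apply go_sub. exists U, V. auto.
Qed.

Lemma split_family_union {G : Type} (mul : G -> G -> G)
  (F1 F2 : (G -> Prop) -> Prop) :
  split_family mul F1 -> split_family mul F2 ->
  split_family mul (fam_union F1 F2).
Proof.
  intros H1 H2 x y L [HL|HL] Lxy.
  - destruct (H1 x y L HL Lxy) as [Lx [Ly [? [? ?]]]].
    exists Lx, Ly. unfold fam_union. tauto.
  - destruct (H2 x y L HL Lxy) as [Lx [Ly [? [? ?]]]].
    exists Lx, Ly. unfold fam_union. tauto.
Qed.

Lemma split_family_mul_preimage_open {G : Type} (mul : G -> G -> G)
  (S : (G -> Prop) -> Prop) (L : G -> Prop) :
  split_family mul S -> S L ->
  prod_open (gen_open S) (gen_open S) (fun p => L (mul (fst p) (snd p))).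
Proof.
  intros HS HL.
  apply gen_open_of_nbhd. intros [x y] Lxy.
  destruct (HS x y L HL Lxy) as [Lx [Ly [SLx [SLy [Lx_x [Ly_y LxLy_L]]]]]].
  exists (fun p => Lx (fst p) /\ Ly (snd p)). repeat split.
  - apply prod_open_rect; apply go_sub; assumption.
  - exact Lx_x.
  - exact Ly_y.
  - intros [a b] [La Lb]. apply LxLy_L. exists a, b. auto.
Qed.

Theorem proposition5p3 (G : Type) (mul : G -> G -> G) (e : G) (inv : G -> G)
  (mulA : forall x y z, mul x (mul y z) = mul (mul x y) z)
  (mul1g : forall x, mul e x = x)
  (mulVg : forall x, mul (inv x) x = e)
  (LL RR : (G -> Prop) -> Prop)
  (HL : split_family mul LL) (HR : split_family mul RR) :
  continuous_wrt
    (prod_open (gen_open (fam_union LL RR)) (gen_open (fam_union LL RR)))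
    (gen_open (fam_union LL RR))
    (fun p : G * G => mul (fst p) (snd p)).
Proof.
  apply continuous_wrt_subbase.
  - apply go_full.
  - apply go_inter.
  - apply go_union.
  - intros A HA.
    apply split_family_mul_preimage_open; [|exact HA].
    exact (split_family_union mul LL RR HL HR).
Qed.
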